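(* Let $(H,R)$ be a quasitriangular Hopf algebra and $\pi:H\to K$ a surjective Hopf algebra map. Then, identifying $\underline{H}$ with $H$ as vector spaces, $$\{h\in H\mid (\mathrm{id}\otimes\pi)\circ\underline{\Delta}(h)=h\otimes 1\}=H^{co\pi}:=\{h\in H\mid (\mathrm{id}\otimes\pi)\circ\Delta(h)=h\otimes 1\}.$$
   Context: $(H,R)$ quasitriangular means $R=\sum_iR_i\otimes R^i\in H\otimes H$ is invertible with $(\Delta\otimes\mathrm{id})(R)=R_{13}R_{23}$, $(\mathrm{id}\otimes\Delta)(R)=R_{13}R_{12}$, $\tau\Delta(h)=R\Delta(h)R^{-1}$. Sweedler notation $\Delta(h)=h_{(1)}\otimes h_{(2)}$; $\mathrm{ad}_h(a)=h_{(1)}aS(h_{(2)})$. The transmuted comultiplication on $H$ is $\underline{\Delta}(a)=\sum_i a_{(1)}S(R^i)\otimes\mathrm{ad}_{R_i}(a_{(2)})$. *)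

(* Hopf algebras over a field k, with elements of tensor
   products represented as finite formal sums (Sweedler-style lists of pairs /
   triples) and equality of tensors given by the universal property of the
   tensor product: two formal sums are equal as tensors iff every bilinear
   (resp. trilinear) map into every k-vector space takes the same value on them. *)
From HB Require Import structures.
From mathcomp Require Import all_boot all_order all_algebra.
Set Implicit Arguments. Unset Strict Implicit. Unset Printing Implicit Defensive.
Import GRing.Theory.
Local Open Scope ring_scope.

Section Tensors.
Variable k : fieldType.

Definition bilin (V W U : lmodType k) (B : V -> W -> U) : Prop :=
  (forall (c : k) x x' y, B (c *: x + x') y = c *: B x y + B x' y) /\
  (forall (c : k) x y y', B x (c *: y + y') = c *: B x y + B x y').

Definition trilin (V W X U : lmodType k) (B : V -> W -> X -> U) : Prop :=
  (forall (c : k) x x' y z, B (c *: x + x') y z = c *: B x y z + B x' y z) /\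
  (forall (c : k) x y y' z, B x (c *: y + y') z = c *: B x y z + B x y' z) /\
  (forall (c : k) x y z z', B x y (c *: z + z') = c *: B x y z + B x y z').

Definition teq2 (V W : lmodType k) (s t : seq (V * W)) : Prop :=
  forall (U : lmodType k) (B : V -> W -> U), bilin B ->
    \sum_(p <- s) B p.1 p.2 = \sum_(p <- t) B p.1 p.2.

Definition teq3 (V W X : lmodType k) (s t : seq (V * W * X)) : Prop :=
  forall (U : lmodType k) (B : V -> W -> X -> U), trilin B ->
    \sum_(p <- s) B p.1.1 p.1.2 p.2 = \sum_(p <- t) B p.1.1 p.1.2 p.2.

End Tensors.

Section Hopf.
Variable k : fieldType.

Definition tmul2 (A : algType k) (s t : seq (A * A)) : seq (A * A) :=
  [seq (p.1 * q.1, p.2 * q.2) | p <- s, q <- t].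
Definition tmul3 (A : algType k) (s t : seq (A * A * A)) : seq (A * A * A) :=
  [seq (p.1.1 * q.1.1, p.1.2 * q.1.2, p.2 * q.2) | p <- s, q <- t].
Definition tflip (A : algType k) (s : seq (A * A)) : seq (A * A) :=
  [seq (p.2, p.1) | p <- s].

Record hopf (H : algType k) := Hopf {
  cop : H -> seq (H * H);
  eps : H -> k;
  antipode : H -> H;
  cop_lin : forall (c : k) (a b : H),
    teq2 (cop (c *: a + b)) ([seq (c *: p.1, p.2) | p <- cop a] ++ cop b);
  cop_mul : forall a b : H, teq2 (cop (a * b)) (tmul2 (cop a) (cop b));
  cop_one : teq2 (cop 1) [:: (1, 1)];
  coassoc : forall h : H,
    teq3 [seq (q.1, q.2, p.2) | p <- cop h, q <- cop p.1]
         [seq (p.1, q.1, q.2) | p <- cop h, q <- cop p.2];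
  eps_lin : forall (c : k) (a b : H), eps (c *: a + b) = c * eps a + eps b;
  eps_mul : forall a b : H, eps (a * b) = eps a * eps b;
  eps_one : eps 1 = 1;
  counitl : forall h : H, \sum_(p <- cop h) eps p.1 *: p.2 = h;
  counitr : forall h : H, \sum_(p <- cop h) eps p.2 *: p.1 = h;
  antipode_lin : forall (c : k) (a b : H),
    antipode (c *: a + b) = c *: antipode a + antipode b;
  antipodel : forall h : H, \sum_(p <- cop h) antipode p.1 * p.2 = (eps h)%:A;
  antipoder : forall h : H, \sum_(p <- cop h) p.1 * antipode p.2 = (eps h)%:A
}.

Definition hopf_map (H K : algType k) (HH : hopf H) (HK : hopf K) (pi : H -> K)
  : Prop :=
  [/\ forall (c : k) (a b : H), pi (c *: a + b) = c *: pi a + pi b,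
      forall a b : H, pi (a * b) = pi a * pi b,
      pi 1 = 1,
      forall h : H, teq2 (cop HK (pi h)) [seq (pi p.1, pi p.2) | p <- cop HH h]
    & forall h : H, eps HK (pi h) = eps HH h].

Record quasitriangular (H : algType k) (HH : hopf H) := QT {
  Rm : seq (H * H);
  Rinv : seq (H * H);
  R_invl : teq2 (tmul2 Rm Rinv) [:: (1, 1)];
  R_invr : teq2 (tmul2 Rinv Rm) [:: (1, 1)];
  (* (Delta (x) id)(R) = R13 R23 *)
  R_copl : teq3 [seq (q.1, q.2, p.2) | p <- Rm, q <- cop HH p.1]
                (tmul3 [seq (p.1, 1, p.2) | p <- Rm] [seq (1, p.1, p.2) | p <- Rm]);
  (* (id (x) Delta)(R) = R13 R12 *)
  R_copr : teq3 [seq (p.1, q.1, q.2) | p <- Rm, q <- cop HH p.2]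
                (tmul3 [seq (p.1, 1, p.2) | p <- Rm] [seq (p.1, p.2, 1) | p <- Rm]);
  (* tau Delta(h) = R Delta(h) R^-1 *)
  R_braid : forall h : H,
    teq2 (tflip (cop HH h)) (tmul2 (tmul2 Rm (cop HH h)) Rinv)
}.

Definition adj (H : algType k) (HH : hopf H) (x y : H) : H :=
  \sum_(p <- cop HH x) p.1 * y * antipode HH p.2.

(* transmuted comultiplication: a_(1) S(R^i) (x) ad_{R_i}(a_(2)) *)
Definition tcop (H : algType k) (HH : hopf H) (Q : quasitriangular HH) (a : H)
  : seq (H * H) :=
  [seq (q.1 * antipode HH r.2, adj HH r.1 q.2) | q <- cop HH a, r <- Rm Q].

Definition id_pi (H K : algType k) (pi : H -> K) (s : seq (H * H)) : seq (H * K) :=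
  [seq (p.1, pi p.2) | p <- s].

End Hopf.

From HB Require Import structures.
From mathcomp Require Import all_boot all_order all_algebra.
Set Implicit Arguments. Unset Strict Implicit. Unset Printing Implicit Defensive.
Import GRing.Theory.
Local Open Scope ring_scope.

(* For L in H (x) H let T_L ([twist L]) be the endomorphism
   x (x) y |-> x S(L^2) (x) ad_{L_1}(y) of H (x) K, where H acts on K by adjunction
   through pi ([adpi]).  Then (id (x) pi) o Delta_bar = T_R o (id (x) pi) o Delta.
   Since (eps (x) id)(R) = (eps (x) id)(R^-1) = 1, both T_R and T_{R^-1} fix h (x) 1,
   and T_{R^-1} T_R = id because R^-1 R = 1 (x) 1 and S is antimultiplicative.
   So (id (x) pi)Delta(h) = h (x) 1 iff T_R of it is h (x) 1. *)

Section Linearity.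
Variable k : fieldType.
Implicit Types U V W X : lmodType k.

Lemma lin0 V W (f : V -> W) : linear f -> f 0 = 0.
Proof.
by move=> hf; have := hf (-1) 0 0; rewrite scaler0 addr0 scaleN1r => ->; rewrite addNr.
Qed.

Lemma linD V W (f : V -> W) : linear f -> forall a b, f (a + b) = f a + f b.
Proof. by move=> hf a b; rewrite -[a]scale1r hf !scale1r. Qed.

Lemma linZ V W (f : V -> W) : linear f -> forall c a, f (c *: a) = c *: f a.
Proof. by move=> hf c a; rewrite -[c *: a]addr0 hf lin0 // addr0. Qed.

Lemma lin_sum V W (f : V -> W) (I : Type) (s : seq I) (F : I -> V) :
  linear f -> f (\sum_(i <- s) F i) = \sum_(i <- s) f (F i).
Proof.
move=> hf; elim: s => [|x s IH]; first by rewrite !big_nil lin0.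
by rewrite !big_cons linD // IH.
Qed.

Lemma lin_comp U V W (f : V -> W) (g : U -> V) :
  linear f -> linear g -> linear (fun x => f (g x)).
Proof. by move=> hf hg c a b; rewrite hg hf. Qed.

Lemma lin_scale V W c (f : V -> W) : linear f -> linear (fun x => c *: f x).
Proof. by move=> hf a x y; rewrite hf scalerDr !scalerA mulrC. Qed.

Lemma lin_sumf V W (I : Type) (s : seq I) (F : I -> V -> W) :
  (forall i, linear (F i)) -> linear (fun x => \sum_(i <- s) F i x).
Proof.
by move=> hF c a b; rewrite scaler_sumr -big_split; apply: eq_bigr => i _; apply: hF.
Qed.

Lemma lin_mull (A : algType k) (a : A) : linear (fun x : A => a * x).
Proof. by move=> c x y; rewrite mulrDr scalerAr. Qed.

Lemma lin_mulr (A : algType k) (a : A) : linear (fun x : A => x * a).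
Proof. by move=> c x y; rewrite mulrDl scalerAl. Qed.

Lemma bilin_linl U V W (B : V -> W -> U) y : bilin B -> linear (B^~ y).
Proof. by case=> hl _ c x x'; rewrite hl. Qed.

Lemma bilin_linr U V W (B : V -> W -> U) x : bilin B -> linear (B x).
Proof. by case=> _ hr c y y'; rewrite hr. Qed.

Lemma bilin_of_lin U V W (B : V -> W -> U) :
  (forall y, linear (B^~ y)) -> (forall x, linear (B x)) -> bilin B.
Proof. by move=> hl hr; split=> c x x' y; [rewrite hl | rewrite hr]. Qed.

Lemma trilin_of_lin U V W X (C : V -> W -> X -> U) :
  (forall y z, linear (fun x => C x y z)) -> (forall x z, linear (fun y => C x y z)) ->
  (forall x y, linear (C x y)) -> trilin C.
Proof. by move=> h1 h2 h3; do !split=> *; rewrite ?h1 ?h2 ?h3. Qed.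

Lemma bilin_sum U V W (I : Type) (s : seq I) (F : I -> V -> W -> U) :
  (forall i, bilin (F i)) -> bilin (fun x y => \sum_(i <- s) F i x y).
Proof.
move=> hF; apply: bilin_of_lin => [y|x]; apply: lin_sumf => i.
  exact: bilin_linl.
exact: bilin_linr.
Qed.

Lemma teq2_sym V W (s t : seq (V * W)) : teq2 s t -> teq2 t s.
Proof. by move=> st U B hB; rewrite st. Qed.

Lemma teq2_trans V W (s t u : seq (V * W)) : teq2 s t -> teq2 t u -> teq2 s u.
Proof. by move=> st tu U B hB; rewrite st ?tu. Qed.

End Linearity.

Section HopfAlgebra.
Variables (k : fieldType) (H : algType k) (HH : hopf H).
Local Notation D := (cop HH).
Local Notation e := (eps HH).
Local Notation S := (antipode HH).

Lemma antipode_linear : linear S.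
Proof. exact: antipode_lin. Qed.

Lemma lin_eps_scale (V : lmodType k) (v : V) : linear (fun x => e x *: v).
Proof. by move=> c a b; rewrite (eps_lin HH) scalerDl scalerA. Qed.

Lemma cop_sum_linear (U : lmodType k) (B : H -> H -> U) :
  bilin B -> linear (fun x => \sum_(p <- D x) B p.1 p.2).
Proof.
move=> hB c a b; rewrite (cop_lin HH c a b hB) big_cat big_map scaler_sumr.
by congr (_ + _); apply: eq_bigr => p _; rewrite (linZ (bilin_linl _ hB)).
Qed.

Lemma cop_sumM (U : lmodType k) (B : H -> H -> U) a b : bilin B ->
  \sum_(p <- D (a * b)) B p.1 p.2 =
  \sum_(p <- D a) \sum_(q <- D b) B (p.1 * q.1) (p.2 * q.2).
Proof. by move=> hB; rewrite (cop_mul HH a b hB) big_allpairs_dep. Qed.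

Lemma cop_sum1 (U : lmodType k) (B : H -> H -> U) : bilin B ->
  \sum_(p <- D 1) B p.1 p.2 = B 1 1.
Proof. by move=> hB; rewrite (cop_one HH hB) big_seq1. Qed.

Lemma coassoc_sum (U : lmodType k) (C : H -> H -> H -> U) h : trilin C ->
  \sum_(p <- D h) \sum_(q <- D p.1) C q.1 q.2 p.2 =
  \sum_(p <- D h) \sum_(q <- D p.2) C p.1 q.1 q.2.
Proof. by move=> hC; have := coassoc HH h hC; rewrite !big_allpairs_dep. Qed.

Lemma sum_counitl (V : lmodType k) (L : H -> V) h : linear L ->
  \sum_(p <- D h) e p.1 *: L p.2 = L h.
Proof.
move=> hL; rewrite -[in RHS](counitl HH h) lin_sum //.
by apply: eq_bigr => p _; rewrite (linZ hL).
Qed.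

Lemma sum_counitr (V : lmodType k) (L : H -> V) h : linear L ->
  \sum_(p <- D h) e p.2 *: L p.1 = L h.
Proof.
move=> hL; rewrite -[in RHS](counitr HH h) lin_sum //.
by apply: eq_bigr => p _; rewrite (linZ hL).
Qed.

Lemma sum_antipodel (V : lmodType k) (L : H -> V) h : linear L ->
  \sum_(p <- D h) L (S p.1 * p.2) = e h *: L 1.
Proof. by move=> hL; rewrite -lin_sum // antipodel (linZ hL). Qed.

Lemma sum_antipoder (V : lmodType k) (L : H -> V) h : linear L ->
  \sum_(p <- D h) L (p.1 * S p.2) = e h *: L 1.
Proof. by move=> hL; rewrite -lin_sum // antipoder (linZ hL). Qed.

Lemma sum_coassoc_antipoder (U : lmodType k) (B : H -> H -> U) h : bilin B ->
  \sum_(p <- D h) \sum_(q <- D p.1) B q.1 (q.2 * S p.2) = B h 1.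
Proof.
move=> hB; have hC : trilin (fun x y z => B x (y * S z)).
  apply: trilin_of_lin => [y z|x z|x y]; first exact: bilin_linl.
    exact: lin_comp (bilin_linr _ hB) (lin_mulr _).
  exact: lin_comp (bilin_linr _ hB) (lin_comp (lin_mull _) antipode_linear).
rewrite (coassoc_sum h hC) -[RHS](sum_counitr h (bilin_linl 1 hB)).
by apply: eq_bigr => p _; rewrite (sum_antipoder _ (bilin_linr _ hB)).
Qed.

Lemma antipode1 : S 1 = 1.
Proof.
have hB : bilin (fun x y => S x * y).
  apply: bilin_of_lin => [y|x]; last exact: lin_mull.
  exact: lin_comp (lin_mulr y) antipode_linear.
by have := antipodel HH 1; rewrite (cop_sum1 hB) eps_one mulr1 scale1r.
Qed.

(* S(ab) = S(a_(1) b) a_(2) S(a_(3)) = S(a_(1) b_(1)) a_(2) b_(2) S(b_(3)) S(a_(3))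
        = e(a_(1) b_(1)) S(b_(2)) S(a_(2)) = S(b) S(a) *)
Lemma antipodeM a b : S (a * b) = S b * S a.
Proof.
have linSl d : linear (fun x => S x * d) := lin_comp (lin_mulr d) antipode_linear.
have linSr c : linear (fun x => c * S x) := lin_comp (lin_mull c) antipode_linear.
have bilSb : bilin (fun x y => S (x * b) * y).
  apply: bilin_of_lin => [y|x]; last exact: lin_mull.
  exact: lin_comp (linSl y) (lin_mulr b).
have bilS c d u : bilin (fun x y => S (c * x) * (d * (y * u))).
  apply: bilin_of_lin => [y|x]; first exact: lin_comp (linSl _) (lin_mull c).
  exact: lin_comp (lin_mull _) (lin_comp (lin_mull d) (lin_mulr u)).
transitivity (\sum_(p <- D a) \sum_(q <- D p.1) \sum_(p' <- D b) \sum_(q' <- D p'.1)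
    S (q.1 * q'.1) * (q.2 * q'.2) * (S p'.2 * S p.2)).
  rewrite -[LHS]mulr1 -(sum_coassoc_antipoder a bilSb).
  apply: eq_bigr => p _; apply: eq_bigr => q _.
  rewrite -{1}[S p.2]mul1r -(sum_coassoc_antipoder b (bilS q.1 q.2 (S p.2))).
  by apply: eq_bigr => p' _; apply: eq_bigr => q' _; rewrite !mulrA.
rewrite -(sum_counitl a (linSr (S b))); apply: eq_bigr => p _.
rewrite exchange_big /= -(sum_counitl b (linSl (S p.2))) scaler_sumr.
apply: eq_bigr => p' _.
have bilX : bilin (fun x y => S x * y * (S p'.2 * S p.2)).
  apply: bilin_of_lin => [y|x]; first exact: lin_comp (lin_mulr _) (linSl y).
  exact: lin_comp (lin_mulr _) (lin_mull _).
by rewrite -(cop_sumM _ _ bilX) (sum_antipodel _ (lin_mulr _)) eps_mul mul1r scalerA.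
Qed.

End HopfAlgebra.

Section Quasitriangular.
Variables (k : fieldType) (H : algType k) (HH : hopf H) (Q : quasitriangular HH).
Local Notation e := (eps HH).
Local Notation R := (Rm Q).

Lemma bilin_eps_mull (c : H) : bilin (fun x y : H => e x *: (c * y)).
Proof.
apply: bilin_of_lin => [y|x]; first exact: lin_eps_scale.
exact: lin_scale (lin_mull c).
Qed.

(* [eps (x) id (x) id] applied to [(Delta (x) id)(R) = R13 R23] gives [R = (1 (x) u) R]. *)
Lemma Rm_mul_counit (U : lmodType k) (B : H -> H -> U) : bilin B ->
  \sum_(r <- R) B r.1 r.2 = \sum_(r <- R) B r.1 ((\sum_(r' <- R) e r'.1 *: r'.2) * r.2).
Proof.
move=> hB; have hC : trilin (fun x y z => e x *: B y z).
  apply: trilin_of_lin => [y z|x z|x y]; first exact: lin_eps_scale.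
    exact: lin_scale (bilin_linl _ hB).
  exact: lin_scale (bilin_linr _ hB).
have := R_copl Q hC; rewrite /tmul3 !big_allpairs_dep big_map /=.
under [RHS]eq_bigr do rewrite big_map /=.
rewrite exchange_big /= => E.
transitivity (\sum_(r <- R) \sum_(q <- cop HH r.1) e q.1 *: B q.2 r.2).
  by apply: eq_bigr => r _; rewrite (sum_counitl _ _ (bilin_linl r.2 hB)).
rewrite E; apply: eq_bigr => r _.
rewrite mulr_suml (lin_sum _ _ (bilin_linr r.1 hB)); apply: eq_bigr => r' _.
by rewrite mulr1 mul1r -scalerAl (linZ (bilin_linr _ hB)).
Qed.

Lemma Rm_counit : \sum_(r <- R) e r.1 *: r.2 = 1.
Proof.
set u := \sum_(r <- R) _.
have hB : bilin (fun x y => \sum_(q <- Rinv Q) e (x * q.1) *: (y * q.2)).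
  apply: bilin_sum => q; apply: bilin_of_lin => [y|x].
    exact: lin_comp (lin_eps_scale _ _) (lin_mulr _).
  exact: lin_scale (lin_mulr _).
have := Rm_mul_counit hB.
have := R_invl Q (bilin_eps_mull 1); rewrite big_allpairs_dep big_seq1 /=.
under eq_bigr do under eq_bigr do rewrite mul1r.
move=> ->; rewrite eps_one scale1r mulr1.
have := R_invl Q (bilin_eps_mull u); rewrite big_allpairs_dep big_seq1 /=.
under eq_bigr do under eq_bigr do rewrite mulrA.
by move=> ->; rewrite eps_one scale1r mulr1.
Qed.

Lemma Rinv_counit : \sum_(r <- Rinv Q) e r.1 *: r.2 = 1.
Proof.
have := R_invr Q (bilin_eps_mull 1); rewrite big_allpairs_dep big_seq1 /=.
under eq_bigr do under eq_bigr do rewrite mul1r.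
rewrite eps_one scale1r mulr1 => <-.
rewrite -[LHS]mulr1 -Rm_counit mulr_suml; apply: eq_bigr => q _.
rewrite mulr_sumr; apply: eq_bigr => r _.
by rewrite eps_mul -scalerAl -scalerAr scalerA.
Qed.

End Quasitriangular.

Section Twist.
Variables (k : fieldType) (H K : algType k) (HH : hopf H) (pi : H -> K).
Hypotheses (pi_lin : linear pi) (piM : forall a b, pi (a * b) = pi a * pi b)
  (pi1 : pi 1 = 1).
Local Notation D := (cop HH).
Local Notation e := (eps HH).
Local Notation S := (antipode HH).

Definition adpi (a : H) (y : K) : K := \sum_(w <- D a) pi w.1 * y * pi (S w.2).

Definition twist (L : seq (H * H)) (s : seq (H * K)) : seq (H * K) :=
  [seq (p.1 * S r.2, adpi r.1 p.2) | p <- s, r <- L].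

Lemma adpi_linr a : linear (adpi a).
Proof.
apply: lin_sumf => w c y y'.
by rewrite mulrDr mulrDl -scalerAr -scalerAl.
Qed.

Lemma bilin_adpi y : bilin (fun u v => pi u * y * pi (S v)).
Proof.
apply: bilin_of_lin => [v|u].
  exact: lin_comp (lin_mulr (pi (S v))) (lin_comp (lin_mulr y) pi_lin).
exact: lin_comp (lin_mull (pi u * y)) (lin_comp pi_lin (antipode_linear HH)).
Qed.

Lemma adpi_linl y : linear (adpi^~ y).
Proof. by rewrite /adpi; apply: cop_sum_linear (bilin_adpi y). Qed.

Lemma adpi1 y : adpi 1 y = y.
Proof. by rewrite /adpi (cop_sum1 HH (bilin_adpi y)) antipode1 pi1 mul1r mulr1. Qed.

Lemma adpiM a b y : adpi (a * b) y = adpi a (adpi b y).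
Proof.
rewrite /adpi (cop_sumM HH _ _ (bilin_adpi y)); apply: eq_bigr => p _.
rewrite mulr_sumr mulr_suml; apply: eq_bigr => q _.
by rewrite antipodeM !piM !mulrA.
Qed.

Lemma adpi_unit a : adpi a 1 = e a *: 1.
Proof.
transitivity (pi (\sum_(w <- D a) w.1 * S w.2)).
  by rewrite /adpi (lin_sum _ _ pi_lin); apply: eq_bigr => w _; rewrite mulr1 piM.
by rewrite antipoder (linZ pi_lin) pi1.
Qed.

Lemma pi_adj a x : pi (adj HH a x) = adpi a (pi x).
Proof. by rewrite /adj (lin_sum _ _ pi_lin); apply: eq_bigr => w _; rewrite !piM. Qed.

Lemma sum_twist (U : nmodType) (F : H * K -> U) L s :
  \sum_(p <- twist L s) F p = \sum_(p <- s) \sum_(r <- L) F (p.1 * S r.2, adpi r.1 p.2).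
Proof. exact: big_allpairs_dep. Qed.

Lemma twist_teq2 L s t : teq2 s t -> teq2 (twist L s) (twist L t).
Proof.
move=> st U B hB; rewrite !sum_twist /=.
apply: (st _ (fun x y => \sum_(r <- L) B (x * S r.2) (adpi r.1 y))).
apply: bilin_sum => r; apply: bilin_of_lin => [y|x].
  exact: lin_comp (bilin_linl _ hB) (lin_mulr _).
exact: lin_comp (bilin_linr _ hB) (adpi_linr _).
Qed.

Lemma twist_unit L h :
  \sum_(r <- L) e r.1 *: r.2 = 1 -> teq2 (twist L [:: (h, 1)]) [:: (h, 1)].
Proof.
move=> counitL U B hB; rewrite sum_twist !big_seq1 /=.
have linB : linear (fun x => B (h * S x) 1).
  exact: lin_comp (bilin_linl _ hB) (lin_comp (lin_mull h) (antipode_linear HH)).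
rewrite -[in RHS](mulr1 h) -(antipode1 HH) -counitL (lin_sum _ _ linB).
by apply: eq_bigr => r _; rewrite adpi_unit (linZ linB) (linZ (bilin_linr _ hB)).
Qed.

(* [twist L] is inverted by [twist L'] when [L' L = 1 (x) 1]: the two twists combine
   through [S (q_2 r_2) = S r_2 S q_2] and [adpi (q_1 r_1) = adpi q_1 \o adpi r_1]. *)
Lemma twistK L L' s :
  teq2 (tmul2 L' L) [:: (1, 1)] -> teq2 (twist L' (twist L s)) s.
Proof.
move=> invL U B hB; rewrite !sum_twist; apply: eq_bigr => p _ /=.
have hPhi : bilin (fun a c => B (p.1 * S c) (adpi a p.2)).
  apply: bilin_of_lin => [c|a]; first exact: lin_comp (bilin_linr _ hB) (adpi_linl _).
  exact: lin_comp (bilin_linl _ hB) (lin_comp (lin_mull _) (antipode_linear HH)).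
have := invL _ _ hPhi; rewrite big_allpairs_dep big_seq1 /= (antipode1 HH) mulr1 adpi1.
move=> <-; rewrite exchange_big; apply: eq_bigr => q _; apply: eq_bigr => r _.
by rewrite antipodeM mulrA adpiM.
Qed.

Lemma id_pi_tcop (Q : quasitriangular HH) h :
  id_pi pi (tcop Q h) = twist (Rm Q) (id_pi pi (D h)).
Proof.
rewrite /id_pi /tcop /twist map_allpairs allpairs_mapl.
by apply: eq_allpairs => q r; rewrite pi_adj.
Qed.

End Twist.

Theorem mainTheorem2 (k : fieldType) (H K : algType k)
  (HH : hopf H) (HK : hopf K) (Q : quasitriangular HH) (pi : H -> K) :
  hopf_map HH HK pi ->
  (forall y : K, exists x : H, pi x = y) ->
  forall h : H,
    teq2 (id_pi pi (tcop Q h)) [:: (h, 1 : K)] <->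
    teq2 (id_pi pi (cop HH h)) [:: (h, 1 : K)].
Proof.
(* only the algebra-map part of [hopf_map] is needed, and pi need not be onto *)
move=> [pi_lin piM pi1 _ _] _ h; rewrite (id_pi_tcop pi_lin piM).
have unitR := twist_unit pi_lin piM pi1 h (Rm_counit Q).
have unitRinv := twist_unit pi_lin piM pi1 h (Rinv_counit Q).
split=> [coinvT | coinv].
  apply: teq2_trans (teq2_sym (twistK HH pi_lin piM pi1 _ (R_invr Q))) _.
  exact: teq2_trans (twist_teq2 HH pi (Rinv Q) coinvT) unitRinv.
exact: teq2_trans (twist_teq2 HH pi (Rm Q) coinv) unitR.
Qed.
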